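(* Let $\varphi:\mathcal K\to[0,\infty)$ be a completely alternating, upper semicontinuous set-function with $\varphi(\emptyset)=0$, and let $\nu_\varphi$ be a locally finite measure on $\mathcal F'$ such that $\nu_\varphi(\mathcal F_K)=\varphi(K)$ for all $K\in\mathcal K$. Then for every $f\in\mathrm{USC}$, $$\int f\,d\varphi=\int_{\mathcal F'} f^\vee\,d\nu_\varphi\qquad\text{and}\qquad \int^e f\,d\varphi=\int^e f^\vee\,d\nu_\varphi ,$$ where on the right the first integral is the Lebesgue integral and the second is $\int^e g\,d\nu_\varphi:=\sup_{t>0} t\,\nu_\varphi(\{F\in\mathcal F':\ g(F)\ge t\})$.
   Context: $E$ is a locally compact Hausdorff second countable space; $\mathcal K$ and $\mathcal F$ denote the families of compact and closed subsets of $E$, $\mathcal F'=\mathcal F\setminus\{\emptyset\}$, and for $K\in\mathcal K$, $\mathcal F_K=\{F\in\mathcal F:\ F\cap K\neq\emptyset\}$; $\mathcal F'$ carries the $\sigma$-algebra generated by the sets $\mathcal F_K$, $K\in\mathcal K$. A measure $\nu$ on $\mathcal F'$ is locally finite if $\nu(\mathcal F_K)<\infty$ for all $K\in\mathcal K$. $\varphi:\mathcal K\to[0,\infty)$ is completely alternating if the recursively defined differences $\Delta_{K_1}\varphi(K)=\varphi(K)-\varphi(K\cup K_1)$, $\Delta_{K_n}\cdots\Delta_{K_1}\varphi(K)=\Delta_{K_{n-1}}\cdots\Delta_{K_1}\varphi(K)-\Delta_{K_{n-1}}\cdots\Delta_{K_1}\varphi(K\cup K_n)$ are $\le 0$ for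 all $n\ge1$ and $K,K_1,\dots,K_n\in\mathcal K$; it is upper semicontinuous if $\varphi(K_n)\downarrow\varphi(K)$ whenever $K_n\downarrow K$ in $\mathcal K$. $\mathrm{USC}$ is the family of bounded non-negative upper semicontinuous functions on $E$ with relatively compact support $\{f\neq0\}$ (so $\{f\ge t\}\in\mathcal K$ for $t>0$). For $f\in\mathrm{USC}$: Choquet integral $\int f\,d\varphi=\int_0^\infty\varphi(\{f\ge t\})\,dt$; extremal integral $\int^e f\,d\varphi=\sup\{\varphi(K)\inf_{x\in K}f(x):\ K\in\mathcal K\}$. For a closed set $F$, $f^\vee(F)=\sup_{x\in F}f(x)$. *)

From HB Require Import structures.
From mathcomp Require Import all_boot all_order all_algebra.
From mathcomp Require Import all_classical all_reals all_analysis.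
Set Implicit Arguments. Unset Strict Implicit. Unset Printing Implicit Defensive.
Import Order.TTheory GRing.Theory Num.Theory.
Import numFieldNormedType.Exports.
Local Open Scope classical_set_scope.
Local Open Scope ring_scope.

Definition closedF (E : topologicalType) :=
  {F : set E | closed F /\ F !=set0}.

Section ClosedFInstances.
Variable E : ptopologicalType.
HB.instance Definition _ := gen_eqMixin (closedF E).
HB.instance Definition _ := gen_choiceMixin (closedF E).
Lemma setT_closedF : closed [set: E] /\ [set: E] !=set0.
Proof. by split; [exact: closedT | exists point]. Qed.
HB.instance Definition _ :=
  isPointed.Build (closedF E) (exist _ [set: E] setT_closedF).
End ClosedFInstances.

Definition hitting (E : topologicalType) (K : set E) : set (closedF E) :=
  [set F | (proj1_sig F) `&` K !=set0].

Definition hitting_family (E : topologicalType) : set (set (closedF E)) :=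
  [set hitting K | K in [set K : set E | compact K]].

Definition FSpace (E : ptopologicalType) :=
  g_sigma_algebraType (@hitting_family E).

(* iterated differences Delta_{K_n} ... Delta_{K_1} phi (K),
   with the list written [:: K_n; ...; K_1] *)
Fixpoint Delta (E : Type) (R : realType) (phi : set E -> R)
    (s : seq (set E)) (K : set E) : R :=
  match s with
  | [::] => phi K
  | Kn :: s' => Delta phi s' K - Delta phi s' (K `|` Kn)
  end.

Definition completely_alternating (E : topologicalType) (R : realType)
    (phi : set E -> R) :=
  forall (s : seq (set E)) (K : set E), s <> [::] ->
    (forall A, A \in s -> compact A) -> compact K -> Delta phi s K <= 0.

Definition usc_setfun (E : topologicalType) (R : realType) (phi : set E -> R) :=
  forall (Kn : nat -> set E) (K : set E),
    (forall n, compact (Kn n)) -> (forall n, Kn n.+1 `<=` Kn n) ->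
    \bigcap_n Kn n = K ->
    (forall n, phi (Kn n.+1) <= phi (Kn n)) /\ phi (Kn n) @[n --> \oo] --> phi K.

Definition upper_semicontinuous (E : topologicalType) (R : realType)
    (f : E -> R) :=
  forall x a, f x < a -> \forall y \near x, f y < a.

Definition USC (E : topologicalType) (R : realType) (f : E -> R) :=
  [/\ exists M : R, forall x, `|f x| <= M,
      forall x, 0 <= f x,
      upper_semicontinuous f &
      compact (closure [set x | f x != 0])].

Definition choquet_integral (E : topologicalType) (R : realType)
    (phi : set E -> R) (f : E -> R) : \bar R :=
  (\int[@lebesgue_measure R]_(t in `]0%R, +oo[%classic)
     (phi [set x | t <= f x])%:E)%E.

Definition extremal_integral (E : topologicalType) (R : realType)
    (phi : set E -> R) (f : E -> R) : \bar R :=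
  ereal_sup [set (phi K * inf (f @` K))%:E | K in [set K : set E | compact K]].

Definition fvee (E : topologicalType) (R : realType) (f : E -> R)
    (F : closedF E) : R := sup (f @` proj1_sig F).

Definition extremal_integral_measure (d : measure_display) (T : measurableType d)
    (R : realType) (nu : set T -> \bar R) (g : T -> R) : \bar R :=
  ereal_sup [set (t%:E * nu [set F | (t <= g F)%R])%E | t in `]0%R, +oo[%classic].

From HB Require Import structures.
From mathcomp Require Import all_boot all_order all_algebra finmap.
From mathcomp Require Import all_classical all_reals all_analysis measurable_realfun.
Set Implicit Arguments.
Unset Strict Implicit.
Unset Printing Implicit Defensive.
Import Order.TTheory GRing.Theory Num.Theory.
Local Open Scope classical_set_scope.
Local Open Scope ring_scope.

(* For t > 0 the level set {F : f^vee(F) >= t} is exactly the hitting set of the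
   compact set {f >= t}: an upper semicontinuous f vanishing off a compact set
   attains its supremum on every nonempty closed F.  Hence
   nu{f^vee >= t} = phi{f >= t}, and the Choquet identity is the layer-cake formula
   for f^vee.  For the extremal identity, a compact K lies in {f >= inf_K f}, so by
   monotonicity of phi each term phi(K) inf_K f is dominated by some t phi{f >= t},
   while conversely t phi{f >= t} <= phi(C) inf_C f for C = {f >= t}. *)

Section usc_argmax.
Variables (R : realType) (E : ptopologicalType) (f : E -> R).
Hypothesis usc_f : upper_semicontinuous f.

Lemma open_usc_lt (s : R) : open [set x | f x < s].
Proof. by rewrite openE => x /usc_f. Qed.

Lemma closed_usc_ge (t : R) : closed [set x | t <= f x].
Proof.
rewrite (_ : [set x | t <= f x] = ~` [set x | f x < t]).
  by rewrite closedC; exact: open_usc_lt.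
by apply/seteqP; split => x /=; [rewrite leNgt => /negP | move=> /negP; rewrite -leNgt].
Qed.

Lemma usc_compact_argmax (K : set E) : compact K -> K !=set0 ->
  exists2 x, K x & forall y, K y -> f y <= f x.
Proof.
(* Otherwise the open sets {f < f y}, y in K, cover K, and among finitely many of
   them the one with the largest index y does not contain y itself. *)
move=> cK [x0 Kx0]; apply: contrapT => nomax.
have Kcov : K `<=` \bigcup_(y in K) [set z | f z < f y].
  move=> x Kx; apply: contrapT => nx; apply: nomax; exists x => // y Ky.
  by rewrite leNgt; apply/negP => fxy; apply: nx; exists y.
move: cK; rewrite compact_cover => /(_ E K _ (fun y _ => open_usc_lt (f y)) Kcov).
case=> D' D'K D'cov.
have [i D'i _] := D'cov x0 Kx0.
pose m := [arg max_(j > [` D'i]%fset) f (fsval j)]%O.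
have Km : K (fsval m) by apply/set_mem/D'K; exact: fsvalP.
have [j D'j /= ltmj] := D'cov _ Km.
suff : f j <= f (fsval m) by rewrite leNgt ltmj.
by rewrite /m; case: arg_maxP => // k _ /(_ [` D'j]%fset isT).
Qed.
End usc_argmax.

Section usc_function.
Variables (R : realType) (E : ptopologicalType) (f : E -> R).
Hypothesis hf : USC f.

Let usc_f : upper_semicontinuous f. Proof. by case: hf. Qed.
Let f_ge0 x : 0 <= f x. Proof. by case: hf. Qed.
Let supp := closure [set x | f x != 0].
Let compact_supp : compact supp. Proof. by case: hf. Qed.

Let f_notin_supp x : ~ supp x -> f x = 0.
Proof. by move=> nSx; apply: contra_notP nSx => /eqP fx0; exact: subset_closure. Qed.

Lemma compact_USC_ge (t : R) : 0 < t -> compact [set x | t <= f x].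
Proof.
move=> t0; apply: (subclosed_compact _ compact_supp); first exact: closed_usc_ge.
by move=> x /= tx; apply: subset_closure; rewrite /= gt_eqF // (lt_le_trans t0).
Qed.

Lemma has_sup_USC (A : set E) : A !=set0 -> has_sup (f @` A).
Proof.
move=> [x Ax]; split; first by exists (f x), x.
by case: hf => -[M fM] _ _ _; exists M => _ [y _ <-]; exact: le_trans (ler_norm _) (fM y).
Qed.

(* [f] vanishes off the compact set [supp]; on [F `&` supp] it attains its maximum. *)
Lemma fvee_attained (F : closedF E) : exists2 x, sval F x & fvee f F = f x.
Proof.
case: F => F [cF [x0 Fx0]]; rewrite /fvee /=.
have [[y [Sy Fy]]|FS0] := pselect ((supp `&` F) !=set0); last first.
  have f0F z : F z -> f z = 0 by move=> Fz; apply: f_notin_supp => Sz; apply: FS0; exists z.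
  exists x0 => //; rewrite f0F // -[RHS]sup1; congr sup.
  by apply/seteqP; split => [_ [z Fz <-]|_ ->]; [rewrite /= f0F | exists x0; rewrite ?f0F].
have [x [_ Fx] xmax] := usc_compact_argmax usc_f (compact_closedI compact_supp cF)
  (ex_intro _ y (conj Sy Fy)).
exists x => //; apply/le_anti/andP; split; last first.
  by apply: sup_upper_bound; [apply: has_sup_USC; exists x | exists x].
apply: ge_sup; first by exists (f x), x.
move=> _ [z Fz <-]; have [Sz|nSz] := pselect (supp z); first exact: xmax.
by rewrite f_notin_supp.
Qed.

Lemma fvee_ge0 (F : closedF E) : 0 <= fvee f F.
Proof. by have [x _ ->] := fvee_attained F. Qed.

Lemma fvee_geE (t : R) :
  [set F : closedF E | t <= fvee f F] = hitting [set x | t <= f x].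
Proof.
apply/seteqP; split => F /=; first by have [x Fx ->] := fvee_attained F; exists x.
case=> x [Fx tx]; apply: le_trans tx _.
by apply: sup_upper_bound; [apply: has_sup_USC; exists x|exists x].
Qed.

Lemma fvee_gt0_hitting_supp :
  [set F : closedF E | 0 < fvee f F] `<=` hitting (closure [set x | f x != 0]).
Proof.
move=> F /=; have [x Fx -> fx0] := fvee_attained F; exists x; split => //.
by apply: subset_closure; rewrite /= gt_eqF.
Qed.

Lemma measurable_fvee : measurable_fun [set: FSpace E] (fvee f : FSpace E -> R).
Proof.
apply: (measurability (@RGenCInfty.G R)); first exact: RGenCInfty.measurableE.
move=> /= _ [_ [r ->] <-]; rewrite setTI.
have [r0|r0] := leP r 0.
  rewrite (_ : _ @^-1` _ = setT); first exact: measurableT.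
  by apply/seteqP; split => // F _ /=; rewrite in_itv /= andbT (le_trans r0 (fvee_ge0 F)).
rewrite (_ : _ @^-1` _ = hitting [set x | r <= f x]).
  by apply: sub_sigma_algebra; exists [set x | r <= f x] => //; exact: compact_USC_ge.
by rewrite -fvee_geE; apply/seteqP; split => F /=; rewrite in_itv /= andbT.
Qed.

End usc_function.

Section layer_cake.
Local Open Scope ereal_scope.
Context d (T : measurableType d) (R : realType).
Variables (mu : {measure set T -> \bar R}) (g : T -> R).
Hypothesis mg : measurable_fun setT g.
Hypothesis g_ge0 : forall x, (0 <= g x)%R.
Let S := [set x | (0 < g x)%R].
Hypothesis muS : mu S < +oo.

Let mS : measurable S.
Proof.
rewrite -[X in measurable X]setTI.
by have := mg measurableT (measurable_itv `]0%R, +oo[); rewrite set_itvoy.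
Qed.

Let muS_fin : {finite_measure set T -> \bar R} := mfrestr mS muS.

Let muS_finE A : A `<=` S -> muS_fin A = mu A.
Proof. by move=> AS; rewrite /= /mfrestr /mrestr setIidl. Qed.

Let integral_restrict (m : {measure set T -> \bar R}) :
  \int[m]_x (g x)%:E = \int[m]_(x in S) (g x)%:E.
Proof.
rewrite [RHS]integral_mkcond; apply: eq_integral => x _; rewrite patchE.
case: ifPn => // /negP; rewrite inE /S /= => gx0.
by congr EFin; apply/eqP; rewrite eq_le g_ge0 andbT leNgt; apply/negP.
Qed.

Let A := [set p : T * R | (0 < p.2 <= g p.1)%R].

Let mA : measurable A.
Proof.
have mA_bool : measurable_fun setT (fun p : T * R => (0 < p.2 <= g p.1)%R).
  apply: measurable_and; first exact: measurable_fun_ltr measurable_snd.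
  exact: measurable_fun_ler measurable_snd (measurableT_comp mg measurable_fst).
by rewrite -[A]setTI; exact: mA_bool.
Qed.

Let xsectionA x : xsection A x = `]0%R, g x]%classic.
Proof.
by apply/seteqP; split => t; rewrite /xsection /A /= in_itv /= inE.
Qed.

Let ysectionA t : ysection A t = [set x | (0 < t)%R /\ (t <= g x)%R].
Proof.
by apply/seteqP; split => x; rewrite /ysection /A /= inE => /andP.
Qed.

Lemma integral_layer_cake :
  \int[mu]_x (g x)%:E =
  \int[lebesgue_measure]_(t in `]0%R, +oo[%classic) mu [set x | (t <= g x)%R].
Proof.
transitivity (\int[muS_fin]_x lebesgue_measure (xsection A x)).
  rewrite integral_restrict (eq_measure_integral muS_fin) -?integral_restrict; last first.
    by move=> B _ BS; rewrite -muS_finE.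
  apply: eq_integral => x _; rewrite xsectionA lebesgue_measure_itv /= lte_fin.
  have [gx0|] := ltP 0%R (g x); first by rewrite EFinN sube0.
  by rewrite le_eqVlt ltNge g_ge0 orbF => /eqP ->.
transitivity (\int[lebesgue_measure]_t muS_fin (ysection A t)).
  have := indic_fubini_tonelli muS_fin lebesgue_measure mA.
  by rewrite (indic_fubini_tonelli_FE lebesgue_measure mA)
    (@indic_fubini_tonelli_GE _ _ _ (measurableTypeR R) _ muS_fin A mA).
rewrite [RHS]integral_mkcond; apply: eq_integral => t _; rewrite patchE ysectionA.
case: ifPn => [|/negP]; rewrite inE /= in_itv /= andbT => t0.
  rewrite muS_finE; last by move=> x [_ tx]; apply: lt_le_trans tx.
  by congr (mu _); apply/seteqP; split => x /= => [[]|].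
rewrite (_ : [set x | _ /\ _] = set0) ?measure0 //.
by apply/seteqP; split => x // [/t0].
Qed.
End layer_cake.

Lemma extremal_integral_measure_ge0 d (T : measurableType d) (R : realType)
    (nu : {measure set T -> \bar R}) (g : T -> R) :
  (0 <= extremal_integral_measure nu g)%E.
Proof.
apply: le_trans (ereal_sup_ubound _); last by exists 1; rewrite //= in_itv /= andbT.
by rewrite mul1e.
Qed.

Lemma extremal_integral_ge0 (E : topologicalType) (R : realType) (phi : set E -> R)
    (f : E -> R) : phi set0 = 0 -> (0 <= extremal_integral phi f)%E.
Proof.
move=> phi0; apply: le_trans (ereal_sup_ubound _); last by exists set0 => //; exact: compact0.
by rewrite phi0 mul0r.
Qed.

Lemma completely_alternating_monotone (E : topologicalType) (R : realType)
    (phi : set E -> R) (K C : set E) : completely_alternating phi ->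
  compact K -> compact C -> K `<=` C -> phi K <= phi C.
Proof.
move=> phi_ca cK cC KC; have := @phi_ca [:: C] K ltac:(discriminate) _ cK.
by rewrite /= setUidr // subr_le0; apply => A; rewrite inE => /eqP ->.
Qed.

Section capacity_functional.
Variables (R : realType) (E : ptopologicalType) (phi : set E -> R).
Hypothesis phi_ge0 : forall K : set E, compact K -> 0 <= phi K.
Hypothesis phi_ca : completely_alternating phi.
Hypothesis phi0 : phi set0 = 0.
Variable nu : {measure set (FSpace E) -> \bar R}.
Hypothesis nu_phi : forall K : set E, compact K -> nu (hitting K) = (phi K)%:E.
Variables (f : E -> R).
Hypothesis hf : USC f.

Lemma nu_fvee_ge (t : R) : 0 < t ->
  nu [set F : FSpace E | t <= fvee f F] = (phi [set x | t <= f x])%:E.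
Proof. by move=> t0; rewrite fvee_geE // nu_phi //; exact: compact_USC_ge. Qed.

Lemma nu_fvee_gt0_lty : (nu [set F : FSpace E | (0 < fvee f F)%R] < +oo)%E.
Proof.
have [_ _ _ compact_supp] := hf.
have mpos : measurable [set F : FSpace E | 0 < fvee f F].
  rewrite -[X in measurable X]setTI.
  have /(_ measurableT _ (measurable_itv `]0, +oo[)) := measurable_fvee hf.
  by rewrite set_itvoy.
have mhit : measurable (hitting (closure [set x | f x != 0]) : set (FSpace E)).
  by apply: sub_sigma_algebra; exists (closure [set x | f x != 0]).
apply: le_lt_trans (le_measure _ (mem_set mpos) (mem_set mhit) (fvee_gt0_hitting_supp hf)) _.
by have := nu_phi compact_supp; rewrite /= => ->; rewrite ltry.
Qed.

Lemma choquet_integral_fvee : choquet_integral phi f = (\int[nu]_F (fvee f F)%:E)%E.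
Proof.
rewrite integral_layer_cake; last 3 first.
- exact: measurable_fvee.
- exact: fvee_ge0.
- exact: nu_fvee_gt0_lty.
by apply: eq_integral => t; rewrite inE /= in_itv /= andbT => t0; rewrite nu_fvee_ge.
Qed.

Lemma extremal_integral_fvee :
  extremal_integral phi f = extremal_integral_measure nu (fvee f).
Proof.
have [_ f_ge0 _ _] := hf.
apply/le_anti/andP; split; apply: ge_ereal_sup.
- move=> _ [K cK <-]; set s := inf (f @` K).
  have [s_le0|s_gt0] := leP s 0.
    apply: le_trans (extremal_integral_measure_ge0 _ _).
    by rewrite lee_fin mulr_ge0_le0 // phi_ge0.
  have KC : K `<=` [set x | s <= f x].
    by move=> x Kx; apply: ge_inf; [exists 0 => _ [y _ <-] | exists x].
  apply: le_trans (ereal_sup_ubound _); last by exists s; rewrite //= in_itv /= andbT.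
  rewrite nu_fvee_ge // -EFinM lee_fin mulrC ler_wpM2l ?(ltW s_gt0) //.
  by apply: completely_alternating_monotone => //; exact: compact_USC_ge.
- move=> _ [t + <-]; rewrite /= in_itv /= andbT => t0; rewrite nu_fvee_ge //.
  set C := [set x | t <= f x].
  have [->|/set0P C0] := eqVneq C set0.
    by rewrite phi0 mule0; exact: extremal_integral_ge0.
  apply: le_trans (ereal_sup_ubound _); last by exists C => //; exact: compact_USC_ge.
  rewrite -EFinM lee_fin mulrC ler_wpM2l ?phi_ge0 //; first exact: compact_USC_ge.
  by apply: lb_le_inf; [case: C0 => x Cx; exists (f x), x | move=> _ [x Cx <-]].
Qed.

End capacity_functional.

Theorem mainTheorem1 (R : realType) (E : ptopologicalType)
  (hE : hausdorff_space E) (lcE : locally_compact [set: E])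
  (scE : @second_countable E)
  (phi : set E -> R)
  (phi_ge0 : forall K : set E, compact K -> 0 <= phi K)
  (phi_ca : completely_alternating phi)
  (phi_usc : usc_setfun phi)
  (phi0 : phi set0 = 0)
  (nu : {measure set (FSpace E) -> \bar R})
  (nu_lf : forall K : set E, compact K -> (nu (hitting K) < +oo)%E)
  (nu_phi : forall K : set E, compact K -> nu (hitting K) = (phi K)%:E)
  (f : E -> R) (hf : USC f) :
  choquet_integral phi f = (\int[nu]_F (fvee f F)%:E)%E /\
  extremal_integral phi f = extremal_integral_measure nu (fvee f).
Proof.
(* The hypotheses on E and the upper semicontinuity of phi are what it takes to
   construct nu (Choquet's theorem). *)
split; first exact: (choquet_integral_fvee nu_phi hf).
exact: (extremal_integral_fvee phi_ge0 phi_ca phi0 nu_phi hf).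
Qed.
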